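(* Let $(M,S)$ be a spanned map, with $M=(H,\sigma,\alpha)$ and face-permutation $\phi=\sigma\alpha$, and let $\theta$ be its motion function. Then $\theta_{|S}=\sigma_{|S}\alpha_{|S}$ and $\theta_{|\bar S}=\phi_{|\bar S}\alpha_{|\bar S}$, where $\bar S=H\setminus S$. That is, $\theta_{|S}$ is the face-permutation of the pseudo map $M_{|S}$ and $\theta_{|\bar S}$ is the face-permutation of the dual pseudo map $M^*_{|\bar S}$. In particular, a spanned map is a covered map if and only if its motion function is a cyclic permutation.
   Context: Permutations compose right to left. A map is $M=(H,\sigma,\alpha)$ with $H$ finite, $\alpha$ a fixed-point-free involution, $\sigma$ a permutation, $\langle\sigma,\alpha\rangle$ transitive on $H$, and a root in $H$; a pseudo map is the same without transitivity. Its face-permutation is $\sigma\alpha$; faces are its cycles; unicellular means one face. For a permutation $\pi$ and $S\subseteq H$, $\pi_{|S}$ is the permutation of $S$ obtained by deleting from the cycles of $\pi$ the elements not in $S$. A spanned map is $(M,S)$ with $S\subseteq H$ stable by $\alpha$; $M_{|S}=(S,\sigma_{|S},\alpha_{|S})$. The dual map is $M^*=(H,\phi,\alpha)$, so $M^*_{|\bar S}=(\bar S,\phi_{|\bar S},\alpha_{|\bar S})$. $(M,S)$ is a covered map if $M_{|S}$ is a connecting unicellular map: $\sigma_{|S},\alpha_{|S}$ act transitively on $S$, $S$ contains a half-edge of every cycle of $\sigma$ (except that $S=\emptyset$ is allowed when $\sigma$ has a single cycle), and $\sigma_{|S}\alpha_{|S}$ is cyclic. The motion function is $\theta(h)=\sigma\alpha(h)$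 if $h\in S$ and $\theta(h)=\sigma(h)$ if $h\notin S$. *)

From mathcomp Require Import all_boot all_fingroup.
Set Implicit Arguments. Unset Strict Implicit. Unset Printing Implicit Defensive.

(* Permutations are applied as functions; composition right to left:
   (f \o g) h = f (g h). *)

Section Maps.
Variable H : finType.

(* pi_{|S}: for h in S, the first element of pi(h), pi^2(h), ... lying in S
   (deleting from the cycles of pi the elements not in S); identity outside S. *)
Definition restr (pi : H -> H) (S : {set H}) (h : H) : H :=
  if h \in S then head h [seq y <- traject pi (pi h) #|H| | y \in S] else h.

Definition face_perm (sigma alpha : {perm H}) : H -> H := fun h => sigma (alpha h).

Definition fpf_involution (alpha : {perm H}) : Prop :=
  forall h, alpha (alpha h) = h /\ alpha h != h.

(* the group generated by f and g (permutations of a finite set) acts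
   transitively on A *)
Definition transitive_on (f g : H -> H) (A : {set H}) : Prop :=
  forall x y, x \in A -> y \in A -> connect (fun a b => (b == f a) || (b == g a)) x y.

Definition cyclic_on (f : H -> H) (A : {set H}) : Prop :=
  forall x y, x \in A -> y \in A -> fconnect f x y.

Definition is_map (sigma alpha : {perm H}) (r : H) : Prop :=
  fpf_involution alpha /\ transitive_on sigma alpha [set: H].

Definition alpha_stable (alpha : {perm H}) (S : {set H}) : Prop :=
  forall h, (alpha h \in S) = (h \in S).

(* M_{|S} is a connecting unicellular map *)
Definition covered_map (sigma alpha : {perm H}) (S : {set H}) : Prop :=
  [/\ transitive_on (restr sigma S) (restr alpha S) S,
      (forall h, exists2 h', h' \in S & fconnect sigma h h')
        \/ (S = set0 /\ cyclic_on sigma [set: H])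
    & cyclic_on (restr sigma S \o restr alpha S) S].

Definition motion (sigma alpha : {perm H}) (S : {set H}) (h : H) : H :=
  if h \in S then sigma (alpha h) else sigma h.

End Maps.

(* Starting
   from h in S, theta first jumps to sigma (alpha h) and then follows sigma until
   it re-enters S, exactly as sigma_{|S} does from alpha_{|S} h; dually, from
   h outside S it jumps to sigma h = phi (alpha h) and then follows phi until it
   leaves S.  A restriction f_{|A} is cyclic on A iff f is, and every theta-orbit
   meets S iff every cycle of sigma does, which turns the covered-map conditions
   into the cyclicity of theta (transitivity follows from cyclicity of the
   face permutation sigma_{|S} alpha_{|S}). *)

From mathcomp Require Import all_boot all_fingroup.
Set Implicit Arguments. Unset Strict Implicit. Unset Printing Implicit Defensive.

Lemma head_filter_nth (T : Type) (p : pred T) x0 s :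
  head x0 [seq y <- s | p y] = nth x0 s (find p s).
Proof. by elim: s => //= y s IH; case: (p y). Qed.

Section Restriction.
Variable H : finType.
Implicit Types (f g : H -> H) (S A : {set H}) (x y z : H).

(* The scan in [restr] runs over a whole f-cycle, which returns to x since f is
   injective. *)
Lemma restr_first_return f S x : injective f -> x \in S ->
  exists2 k, 0 < k & [/\ restr f S x = iter k f x, iter k f x \in S
                       & forall j, 0 < j < k -> iter j f x \notin S].
Proof.
move=> injf xS; rewrite /restr xS head_filter_nth.
set s := traject f (f x) #|H|.
have nth_s i : i < #|H| -> nth x s i = iter i.+1 f x.
  by move=> iH; rewrite (set_nth_default (f x)) ?size_traject // nth_traject // iterSr.
have order_gt0 : 0 < fingraph.order f x.
  by apply/card_gt0P; exists x; rewrite inE connect0.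
have order_lt : (fingraph.order f x).-1 < #|H| by rewrite prednK ?max_card.
have has_s : has (mem S) s.
  apply/(has_nthP x); exists (fingraph.order f x).-1; first by rewrite size_traject.
  by rewrite /= nth_s // prednK // iter_order.
have find_lt : find (mem S) s < #|H| by rewrite -(size_traject f (f x) #|H|) -has_find.
exists (find (mem S) s).+1 => //; rewrite -nth_s //; split => //.
- exact: nth_find.
- move=> j /andP[j_gt0 j_lt]; have j1_lt : j.-1 < find (mem S) s by rewrite -ltnS prednK.
  by rewrite -(prednK j_gt0) -nth_s ?(ltn_trans j1_lt) //; apply/negbT/before_find.
Qed.

Lemma restr_iter f S x k : injective f -> x \in S -> 0 < k -> iter k f x \in S ->
  (forall j, 0 < j < k -> iter j f x \notin S) -> restr f S x = iter k f x.
Proof.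
move=> injf xS k_gt0 kS before_k.
have [k' k'_gt0 [-> k'S before_k']] := restr_first_return injf xS.
case: (ltngtP k k') => [lt_kk'|lt_k'k|-> //].
- by have := before_k' k; rewrite k_gt0 lt_kk' kS => /(_ isT).
- by have := before_k k'; rewrite k'_gt0 lt_k'k k'S => /(_ isT).
Qed.

Lemma restr_in f S x : injective f -> x \in S -> restr f S x \in S.
Proof. by move=> injf /(restr_first_return injf) [k _ [-> ]]. Qed.

Lemma restr_step f S x : injective f -> x \in S -> f x \in S -> restr f S x = f x.
Proof.
by move=> injf xS fxS; apply: (restr_iter (k := 1)) => // j /andP[/leq_trans h /h].
Qed.

Lemma eq_iter_off f g S x n : (forall z, z \notin S -> f z = g z) ->
  (forall j, j < n -> iter j f x \notin S) -> iter n f x = iter n g x.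
Proof.
move=> fg; elim: n => // n IH before_n; rewrite !iterS -IH ?fg ?before_n // => j j_lt.
exact/before_n/ltnW.
Qed.

Lemma restr_eq_off f g S x y : injective f -> injective g -> x \in S -> y \in S ->
  f x = g y -> (forall z, z \notin S -> f z = g z) -> restr f S x = restr g S y.
Proof.
move=> injf injg xS yS fxgy fg.
have [k k_gt0 [-> kS before_k]] := restr_first_return injf xS.
have iter_fg j : 0 < j <= k -> iter j f x = iter j g y.
  case/andP=> j_gt0 j_le; rewrite -(prednK j_gt0) !iterSr fxgy (eq_iter_off fg) // => i i_lt.
  rewrite -fxgy -iterSr before_k //=.
  by apply: (leq_trans _ j_le); rewrite -(prednK j_gt0) ltnS.
have k_le : 0 < k <= k by rewrite k_gt0 leqnn.
rewrite (iter_fg k k_le); symmetry; apply: (restr_iter injg yS k_gt0).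
- by rewrite -(iter_fg k k_le).
- move=> j /andP[j_gt0 j_lt]; rewrite -iter_fg; last by rewrite j_gt0 ltnW.
  by apply: before_k; rewrite j_gt0.
Qed.

Lemma fconnect_first_hit f g S x y : (forall z, z \notin S -> f z = g z) ->
  fconnect f x y -> y \in S -> exists2 y', y' \in S & fconnect g x y'.
Proof.
move=> fg /iter_findex <- yS; have hit : exists n, iter n f x \in S by exists (findex f x y).
case: (ex_minnP hit) => m mS m_min; exists (iter m f x) => //.
rewrite (eq_iter_off fg) ?fconnect_iter // => j j_lt.
by apply/negP => /m_min; rewrite leqNgt j_lt.
Qed.

Lemma fconnect_restr_sub f S x y : injective f ->
  fconnect (restr f S) x y -> fconnect f x y.
Proof.
move=> injf; apply: connect_sub => z _ /eqP <-; case: (boolP (z \in S)) => zS.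
  by have [k _ [-> _ _]] := restr_first_return injf zS; exact: fconnect_iter.
by rewrite /restr (negbTE zS) connect0.
Qed.

Lemma fconnect_restr f S x y : injective f -> x \in S -> y \in S ->
  fconnect f x y -> fconnect (restr f S) x y.
Proof.
move=> injf xS yS /iter_findex; move: (findex f x y) => n y_def; rewrite -{}y_def in yS *.
elim/ltn_ind: n x xS yS => -[_ x _ _|n IH x xS yS]; first exact: connect0.
have [k k_gt0 [restr_x kS before_k]] := restr_first_return injf xS.
have k_le : k <= n.+1.
  by rewrite leqNgt; apply/negP => lt_nk; have := before_k n.+1; rewrite yS lt_nk => /(_ isT).
rewrite -(subnK k_le) iterD; apply: connect_trans (fconnect1 _ x) _.
rewrite restr_x; apply: IH => //; first by rewrite ltn_subrL k_gt0.
by rewrite -iterD subnK.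
Qed.

Lemma cyclic_on_restr f S : injective f -> cyclic_on (restr f S) S <-> cyclic_on f S.
Proof.
move=> injf; split=> cyc x y xS yS; first exact/(fconnect_restr_sub injf)/cyc.
exact/fconnect_restr/cyc.
Qed.

Lemma iter_eq_in f g A x n : {in A, f =1 g} -> {in A, forall z, f z \in A} ->
  x \in A -> iter n f x = iter n g x /\ iter n f x \in A.
Proof.
move=> fg fA xA; elim: n => [|n [IH IH_A]] //=.
by rewrite -IH fg // -fg // fA.
Qed.

Lemma eq_cyclic_on f g A : {in A, f =1 g} -> {in A, forall z, f z \in A} ->
  cyclic_on f A <-> cyclic_on g A.
Proof.
have imply f' g' : {in A, f' =1 g'} -> {in A, forall z, f' z \in A} ->
    cyclic_on f' A -> cyclic_on g' A.
  move=> fg fA cyc x y xA yA; have /iter_findex <- := cyc x y xA yA.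
  by have [-> _] := iter_eq_in (findex f' x y) fg fA xA; exact: fconnect_iter.
move=> fg fA; split; apply: imply => // z zA; first by rewrite fg.
by rewrite -fg ?fA.
Qed.

Lemma cyclic_on_comp_transitive f g A : cyclic_on (f \o g) A -> transitive_on f g A.
Proof.
move=> cyc x y xA yA; have /iter_findex <- := cyc x y xA yA.
elim: (findex _ x y) => [|n IH] /=; first exact: connect0.
apply: connect_trans IH (connect_trans (y := g (iter n (f \o g) x)) _ _);
  by apply: connect1; rewrite eqxx ?orbT.
Qed.

Lemma cyclic_on_setT f A : injective f -> (forall x, exists2 a, a \in A & fconnect f x a) ->
  cyclic_on f A -> cyclic_on f [set: H].
Proof.
move=> injf reachA cyc x y _ _; have [a aA xa] := reachA x; have [b bA yb] := reachA y.
by rewrite (connect_trans xa) // (connect_trans (cyc a b aA bA)) // fconnect_sym.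
Qed.

End Restriction.

Section Motion.
Variables (H : finType) (sigma alpha : {perm H}) (S : {set H}).
Hypothesis alphaS : alpha_stable alpha S.
Local Notation theta := (motion sigma alpha S).

Lemma motion_inj : injective theta.
Proof.
move=> x y; rewrite /motion; case xS: (x \in S); case yS: (y \in S) => /perm_inj //.
- by move/perm_inj.
- by move=> xy; move: yS; rewrite -xy alphaS xS.
- by move=> xy; move: xS; rewrite xy alphaS yS.
Qed.

Lemma motion_out x : x \notin S -> theta x = sigma x.
Proof. by rewrite /motion => /negbTE ->. Qed.

Lemma motion_restr_in : {in S, restr theta S =1 restr sigma S \o restr alpha S}.
Proof.
move=> h hS /=; rewrite (restr_step (@perm_inj _ alpha)) ?alphaS //.
apply: restr_eq_off; rewrite ?alphaS //.
- exact: motion_inj.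
- exact: perm_inj.
- by rewrite /motion hS.
- exact: motion_out.
Qed.

Lemma motion_restr_out : involutive alpha ->
  {in ~: S, restr theta (~: S) =1 restr (face_perm sigma alpha) (~: S) \o restr alpha (~: S)}.
Proof.
move=> alphaK h hSc /=; have hS : h \notin S by rewrite inE in hSc.
rewrite (restr_step (@perm_inj _ alpha)) ?inE ?alphaS //.
apply: restr_eq_off; rewrite ?inE ?alphaS //.
- exact: motion_inj.
- by move=> a b /perm_inj /perm_inj.
- by rewrite motion_out // /face_perm alphaK.
- by move=> z; rewrite inE negbK /motion => ->.
Qed.

Lemma motion_reaches_S :
  (forall h, exists2 h', h' \in S & fconnect sigma h h') <->
  (forall h, exists2 h', h' \in S & fconnect theta h h').
Proof.
by split=> reach h; have [h' h'S hh'] := reach h;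
  apply: (fconnect_first_hit _ hh' h'S) => z zS; rewrite motion_out.
Qed.

Lemma motion_set0 : S = set0 -> theta =1 sigma.
Proof. by move=> S0 z; rewrite motion_out // S0 in_set0. Qed.

Lemma covered_map_motion : covered_map sigma alpha S <-> cyclic_on theta [set: H].
Proof.
have cycS : cyclic_on (restr sigma S \o restr alpha S) S <-> cyclic_on theta S.
  apply: iff_trans (cyclic_on_restr S motion_inj); apply: eq_cyclic_on => z zS.
    by rewrite motion_restr_in.
  by rewrite -motion_restr_in // restr_in //; exact: motion_inj.
split.
- case=> _ [reach | [S0 cyc_sigma]] cyc_comp.
    exact: cyclic_on_setT motion_inj (motion_reaches_S.1 reach) (cycS.1 cyc_comp).
  by move=> x y _ _; rewrite (eq_fconnect (motion_set0 S0)) cyc_sigma ?inE.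
- move=> cyc; have cyc_in : cyclic_on theta S by move=> x y _ _; apply: cyc; rewrite inE.
  case: (set_0Vmem S) => [S0 | [s0 s0S]].
    split; [by move=> x y; rewrite S0 in_set0 | right | by move=> x y; rewrite S0 in_set0].
    by split=> // x y _ _; rewrite -(eq_fconnect (motion_set0 S0)) cyc ?inE.
  split; [exact/cyclic_on_comp_transitive/cycS | left | exact/cycS].
  by apply/motion_reaches_S => h; exists s0 => //; apply: cyc; rewrite inE.
Qed.

End Motion.

Theorem mainTheorem5 (H : finType) (sigma alpha : {perm H}) (r : H) (S : {set H}) :
  is_map sigma alpha r -> alpha_stable alpha S ->
  [/\ {in S, restr (motion sigma alpha S) S =1 restr sigma S \o restr alpha S},
      {in ~: S, restr (motion sigma alpha S) (~: S)
                 =1 restr (face_perm sigma alpha) (~: S) \o restr alpha (~: S)}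
    & covered_map sigma alpha S <-> cyclic_on (motion sigma alpha S) [set: H]].
Proof.
move=> [fpf _] alphaS; split; first exact: motion_restr_in.
  by apply: motion_restr_out => // h; have [] := fpf h.
exact: covered_map_motion.
Qed.
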